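(* The following two assertions are equivalent. (T) For every admissible index $\mathbf{k}=(k_1,\ldots,k_n)$ with dual index $\mathbf{k}'$, every integer $l\ge0$ and every $\alpha$ with $\mathrm{Re}\,\alpha>0$, $S_l(\mathbf{k};\alpha)=S_l(\mathbf{k}';\alpha)$. (P) For every admissible index $\mathbf{k}=(k_1,\ldots,k_n)$ with dual index $\mathbf{k}'=(k'_1,\ldots,k'_{n'})$, every integer $l\ge0$ and every $\alpha$ with $\mathrm{Re}\,\alpha>0$, \[ \sum_{i=0}^{l}\sum_{\substack{i_1+\cdots+i_{n-1}=i\\ i_j\in\mathbb{Z}_{\ge0}}}S_{l-i}(k_1,\{1\}^{i_1},k_2,\ldots,k_{n-1},\{1\}^{i_{n-1}},k_n;\alpha) =\sum_{i=0}^{l}\sum_{\mathbf{i}^{(1)}_{k'_1-1}+\cdots+\mathbf{i}^{(n')}_{k'_{n'}-2}=i}S_{l-i}\bigl(k'_1+\mathbf{i}^{(1)}_{k'_1-1},\ldots,k'_{n'-1}+\mathbf{i}^{(n'-1)}_{k'_{n'-1}-1},k'_{n'}+\mathbf{i}^{(n')}_{k'_{n'}-2};\alpha\bigr). \]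
   Context: An index $(k_1,\ldots,k_n)$ is admissible if all $k_i$ are positive integers and $k_n\ge2$. For $a\in\mathbb{C}$, $(a)_0=1$ and $(a)_m=a(a+1)\cdots(a+m-1)$ for $m\ge1$. For an admissible index and $\mathrm{Re}\,\alpha>0$, \[ Z(\mathbf{k};\alpha)=\sum_{0\le m_1<\cdots<m_n}\frac{(\alpha)_{m_1}}{m_1!}\frac{m_n!}{(\alpha)_{m_n+1}}\frac{1}{(m_1+\alpha)^{k_1}\cdots(m_{n-1}+\alpha)^{k_{n-1}}(m_n+\alpha)^{k_n-1}}, \] and $S_l(\mathbf{k};\alpha):=\sum_{l_1+\cdots+l_n=l,\ l_i\in\mathbb{Z}_{\ge0}}Z(k_1+l_1,\ldots,k_n+l_n;\alpha)$. $\{1\}^a$ denotes $a$ consecutive entries equal to $1$. Every admissible index can be written uniquely as $(\{1\}^{a_1},b_1+2,\ldots,\{1\}^{a_s},b_s+2)$ with $a_j,b_j\in\mathbb{Z}_{\ge0}$; its dual index is $(\{1\}^{b_s},a_s+2,\ldots,\{1\}^{b_1},a_1+2)$. For $m\ge1$, $r\ge0$, $\mathbf{i}^{(m)}_r:=i^{(m)}_1+\cdots+i^{(m)}_r$ (equal to $0$ if $r=0$); the sum over $\mathbf{i}^{(1)}_{k'_1-1}+\cdots+\mathbf{i}^{(n')}_{k'_{n'}-2}=i$ runs over all tuples of nonnegative integers $(i^{(1)}_1,\ldots,i^{(1)}_{k'_1-1},\ldots,i^{(n')}_1,\ldots,i^{(n')}_{k'_{n'}-2})$ with total sum $i$. 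*)

(* Complex numbers are [R[i]] for an
   arbitrary [R : realType] (from mathcomp-real-closed), viewed as a
   numFieldType so that the analysis topology (limits) applies. *)
From HB Require Import structures.
From mathcomp Require Import all_boot all_order all_algebra.
From mathcomp Require Import all_classical all_reals all_analysis.
From mathcomp Require Import complex.
Import Order.TTheory GRing.Theory Num.Theory.
Import numFieldTopology.Exports numFieldNormedType.Exports.

Set Implicit Arguments.
Unset Strict Implicit.
Unset Printing Implicit Defensive.

Local Open Scope ring_scope.

Definition Cx (R : realType) : numFieldType := R[i].

Definition poch (R : realType) (a : Cx R) (m : nat) : Cx R :=
  \prod_(j < m) (a + j%:R).

Definition admissible (k : seq nat) : bool :=
  [&& k != [::], all (fun x => 0 < x)%N k & (1 < last 0 k)%N].

(* The summand of Z(k;a) at 0 <= m_1 < ... < m_n (given as the seq ms):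
   (a)_{m_1}/m_1! * m_n!/(a)_{m_n+1}
   * 1/((m_1+a)^{k_1} ... (m_{n-1}+a)^{k_{n-1}} (m_n+a)^{k_n-1}) *)
Definition Zterm (R : realType) (k : seq nat) (a : Cx R) (ms : seq nat) : Cx R :=
  let n := size k in
  poch a (head 0%N ms) / (head 0%N ms)`!%:R
  * ((last 0%N ms)`!%:R / poch a (last 0%N ms).+1)
  / \prod_(j < n) ((nth 0%N ms j)%:R + a) ^+ (nth 0%N k j - (j == n.-1 :> nat))%N.

Definition Zpartial (R : realType) (k : seq nat) (a : Cx R) (N : nat) : Cx R :=
  \sum_(t : (size k).-tuple 'I_N | sorted ltn [seq val x | x <- t])
     Zterm k a [seq val x | x <- t].

Definition Zval (R : realType) (k : seq nat) (a : Cx R) : Cx R :=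
  limn (Zpartial k a).

Definition Ssum (R : realType) (l : nat) (k : seq nat) (a : Cx R) : Cx R :=
  \sum_(t : {ffun 'I_(size k) -> 'I_l.+1} | (\sum_(j < size k) (t j : nat) == l)%N)
     Zval [seq (nth 0%N k j + t j)%N | j : 'I_(size k)] a.

(* decomposition k = ({1}^{a_1}, b_1+2, ..., {1}^{a_s}, b_s+2) into the list
   of pairs (a_j, b_j); [acc] counts the pending 1's *)
Fixpoint blocks_aux (acc : nat) (k : seq nat) : seq (nat * nat) :=
  match k with
  | [::] => [::]
  | x :: k' => if x == 1%N then blocks_aux acc.+1 k'
               else (acc, (x - 2)%N) :: blocks_aux 0 k'
  end.
Definition blocks (k : seq nat) : seq (nat * nat) := blocks_aux 0 k.

Definition dual (k : seq nat) : seq nat :=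
  flatten [seq rcons (nseq p.2 1%N) (p.1 + 2)%N | p <- rev (blocks k)].

Fixpoint insert_ones (k : seq nat) (s : seq nat) : seq nat :=
  match k with
  | [::] => [::]
  | [:: x] => [:: x]
  | x :: k' => x :: nseq (head 0%N s) 1%N ++ insert_ones k' (behead s)
  end.

(* lengths of the blocks of variables for the dual side:
   k'_m - 1 for m < n', and k'_{n'} - 2 for the last entry *)
Fixpoint dual_lens (k' : seq nat) : seq nat :=
  match k' with
  | [::] => [::]
  | [:: x] => [:: (x - 2)%N]
  | x :: k'' => (x - 1)%N :: dual_lens k''
  end.

(* cut s into consecutive blocks of lengths r and sum each block:
   bold-i^{(m)}_{r_m} *)
Fixpoint block_sums (r : seq nat) (s : seq nat) : seq nat :=
  match r with
  | [::] => [::]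
  | x :: r' => sumn (take x s) :: block_sums r' (drop x s)
  end.

Definition addseq (s t : seq nat) : seq nat := [seq (p.1 + p.2)%N | p <- zip s t].

(* Write k = ({1}^a_1, b_1+2, ..., {1}^a_s, b_s+2).  Inserting ones between
   the entries of k only enlarges the a_j, so the dual of
   (k_1, {1}^i_1, ..., k_{n-1}, {1}^i_{n-1}, k_n) is k' with its entry a_j+2
   raised by the number of ones inserted into the j-th block of k.  Grouping
   the i_j by block gives runs of lengths a_j+1 = k'_m-1, except a_1 = k'_n'-2
   for the first block, which has no slot in front of its leading entry; this
   reindexes the i-th inner sum of the left side of (P), with every index
   dualized, into the i-th inner sum of the right side.  Hence (T) gives (P)
   termwise, and (P) gives (T) by strong induction on l: the i = 0 terms of (P)
   are S_l(k) and S_l(k'), and the terms with i > 0 agree by induction. *)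

From HB Require Import structures.
From mathcomp Require Import all_boot all_order all_algebra.
From mathcomp Require Import all_classical all_reals all_analysis.
From mathcomp Require Import complex.
From mathcomp Require Import zify.
Import Order.TTheory GRing.Theory Num.Theory.
Import numFieldTopology.Exports numFieldNormedType.Exports.
Local Open Scope ring_scope.

Fixpoint box (n i : nat) : seq (seq nat) :=
  if n is n'.+1 then [seq j :: s | j <- iota 0 i.+1, s <- box n' i] else [:: [::]].

Lemma boxS n i : box n.+1 i = [seq j :: s | j <- iota 0 i.+1, s <- box n i].
Proof. by []. Qed.

Lemma mem_box n i s : (s \in box n i) = (size s == n) && all (leq^~ i) s.
Proof.
elim: n s => [|n IH] [|x s] //; rewrite boxS.
  by apply/negbTE/allpairsP => -[[j t] [_ _]].
apply/allpairsP/idP => [[[j t] [+ + [-> ->]]]|/andP[hs /andP[hx ht]]].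
  by rewrite mem_iota IH /= ltnS eqSS => -> /andP[-> ->].
by exists (x, s); rewrite mem_iota /= ltnS hx IH -eqSS hs.
Qed.

Lemma size_box n i s : s \in box n i -> size s = n.
Proof. by rewrite mem_box => /andP[/eqP]. Qed.

Lemma box_uniq n i : uniq (box n i).
Proof.
elim: n => // n IH; rewrite boxS; apply: allpairs_uniq => //; first exact: iota_uniq.
by move=> [j s] [j' s'] _ _ /= [-> ->].
Qed.

Lemma box0 n : box n 0 = [:: nseq n 0%N].
Proof. by elim: n => // n IH; rewrite boxS IH. Qed.

Lemma big_box_cat (V : nmodType) m n i (F : seq nat -> V) :
  \sum_(s <- box (m + n) i) F s = \sum_(s1 <- box m i) \sum_(s2 <- box n i) F (s1 ++ s2).
Proof.
elim: m F => [|m IH] F; first by rewrite big_seq1.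
by rewrite addSn !boxS !big_allpairs_dep; apply: eq_bigr => j _; rewrite IH.
Qed.

Lemma big_ffun_box (V : nmodType) n i (F : seq nat -> V) :
  \sum_(t : {ffun 'I_n -> 'I_i.+1} | (\sum_(j < n) (t j : nat) == i)%N)
      F [seq val (t j) | j : 'I_n] = \sum_(s <- box n i | sumn s == i) F s.
Proof.
pose g (t : {ffun 'I_n -> 'I_i.+1}) := [seq val (t j) | j : 'I_n].
have sum_g (t : {ffun 'I_n -> 'I_i.+1}) : (\sum_(j < n) (t j : nat))%N = sumn (g t).
  by rewrite sumnE big_image.
have g_inj : injective g.
  move=> t1 t2 e; apply/ffunP => j; apply: val_inj.
  have := congr1 (nth 0%N ^~ j) e.
  by rewrite !(nth_map j) -?enumT ?size_enum_ord // nth_ord_enum.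
have mem_g s : (s \in map g (index_enum _)) = (s \in box n i).
  rewrite mem_box; apply/mapP/idP => [[t _ ->]|/andP[/eqP hs hi]].
    rewrite size_image card_ord eqxx /=.
    by apply/allP => _ /fintype.imageP[j _ ->]; rewrite /= -ltnS.
  exists [ffun j : 'I_n => inord (nth 0%N s j)]; first by rewrite mem_index_enum.
  apply: (@eq_from_nth _ 0%N) => [|j]; first by rewrite size_image card_ord.
  rewrite hs => lt_jn; rewrite (nth_map (Ordinal lt_jn)) ?size_enum_ord //.
  rewrite -[j]/(nat_of_ord (Ordinal lt_jn)) nth_ord_enum ffunE /= inordK // ltnS.
  by apply: (allP hi); rewrite mem_nth ?hs.
have perm_g : perm_eq (map g (index_enum _)) (box n i).
  by apply: uniq_perm mem_g; rewrite ?box_uniq // map_inj_uniq ?index_enum_uniq.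
rewrite -(perm_big _ perm_g) big_map.
by apply: eq_bigl => t; rewrite sum_g.
Qed.

Lemma size_block_sums r s : size (block_sums r s) = size r.
Proof. by elim: r s => //= x r IH s; rewrite IH. Qed.

Lemma block_sums_cat r1 r2 s1 s2 : size s1 = sumn r1 ->
  block_sums (r1 ++ r2) (s1 ++ s2) = block_sums r1 s1 ++ block_sums r2 s2.
Proof.
elim: r1 s1 => [|x r1 IH] s1 /=; first by move/size0nil ->.
move=> hs; have le_x : (x <= size s1)%N by rewrite hs leq_addr.
have -> : drop x (s1 ++ s2) = drop x s1 ++ s2.
  rewrite drop_cat; case: ltnP => // le_s1.
  have -> : x = size s1 by lia.
  by rewrite subnn drop0 drop_size.
by rewrite takel_cat // IH // size_drop hs addKn.
Qed.

Lemma block_sums_nseq0 b r s : block_sums (nseq b 0%N ++ r) s = nseq b 0%N ++ block_sums r s.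
Proof. by elim: b => //= b IH; rewrite take0 drop0 IH. Qed.

Lemma addseq_cat s1 s2 t1 t2 : size s1 = size t1 ->
  addseq (s1 ++ s2) (t1 ++ t2) = addseq s1 t1 ++ addseq s2 t2.
Proof. by move=> h; rewrite /addseq zip_cat // map_cat. Qed.

Lemma addseq_ones_last b x y :
  addseq (nseq b 1%N ++ [:: x]) (nseq b 0%N ++ [:: y]) = nseq b 1%N ++ [:: x + y]%N.
Proof. by elim: b => //= b; rewrite /addseq /= => ->. Qed.

Fixpoint index_of_blocks (B : seq (nat * nat)) : seq nat :=
  if B is p :: B' then nseq p.1 1%N ++ (p.2 + 2)%N :: index_of_blocks B' else [::].

Fixpoint dual_of_blocks (B : seq (nat * nat)) : seq nat :=
  if B is p :: B' then dual_of_blocks B' ++ (nseq p.2 1%N ++ [:: p.1 + 2]%N) else [::].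

Fixpoint blocks_len (B : seq (nat * nat)) : nat :=
  if B is p :: B' then (p.1.+1 + blocks_len B')%N else 0%N.

(* The blocks of [index_of_blocks B] after inserting [u_j] ones in front of
   its [j]-th entry. *)
Fixpoint grow_blocks (B : seq (nat * nat)) (u : seq nat) : seq (nat * nat) :=
  if B is p :: B' then (p.1 + sumn (take p.1.+1 u), p.2)%N :: grow_blocks B' (drop p.1.+1 u)
  else [::].

(* [blocks_aux acc] of [k] after inserting [u_j] ones in front of [k_j]. *)
Fixpoint padded_blocks (acc : nat) (k u : seq nat) : seq (nat * nat) :=
  match k with
  | [::] => [::]
  | x :: k' => if x == 1%N then padded_blocks (acc + 1 + head 0 u)%N k' (behead u)
               else (acc + head 0 u, x - 2)%N :: padded_blocks 0 k' (behead u)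
  end.

Lemma size_index_of_blocks B : size (index_of_blocks B) = blocks_len B.
Proof. by elim: B => //= -[a b] B IH; rewrite size_cat size_nseq /= IH addnS. Qed.

Lemma blocks_auxK acc k : admissible k ->
  nseq acc 1%N ++ k = index_of_blocks (blocks_aux acc k).
Proof.
elim: k acc => // x k IH acc /and3P[_ /= /andP[x_gt0 k_gt0] last_gt1].
have adm_k : k != [::] -> admissible k.
  by case: k {IH} k_gt0 last_gt1 => // y k; rewrite /admissible /= => -> ->.
rewrite [blocks_aux _ _]/=; case: eqP => [x1|/eqP x_neq1].
  case: k IH adm_k last_gt1 {k_gt0} => [|y k] IH adm_k; first by rewrite x1.
  by rewrite -IH ?adm_k // x1 -[acc.+1]addn1 nseqD -catA.
rewrite [RHS]/= subnK; last by lia.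
by case: k IH adm_k last_gt1 {k_gt0} => [|y k] IH adm_k // _; rewrite -IH ?adm_k.
Qed.

Lemma dual_blocks k : dual k = dual_of_blocks (blocks k).
Proof.
rewrite /dual; elim: (blocks k) => //= p B IH.
by rewrite rev_cons map_rcons -cats1 flatten_cat IH /= cats0 -cats1.
Qed.

Lemma blocks_aux_cons acc x k : blocks_aux acc (x :: k) =
  if x == 1%N then blocks_aux acc.+1 k else (acc, x - 2)%N :: blocks_aux 0 k.
Proof. by []. Qed.

Lemma blocks_aux_nseq1 acc j k : blocks_aux acc (nseq j 1%N ++ k) = blocks_aux (acc + j) k.
Proof. by elim: j acc => [|j IH] acc /=; rewrite ?addn0 // IH addSnnS. Qed.

Lemma padded_blocks_cons acc x k u : padded_blocks acc (x :: k) u =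
  if x == 1%N then padded_blocks (acc + 1 + head 0 u)%N k (behead u)
  else (acc + head 0 u, x - 2)%N :: padded_blocks 0 k (behead u).
Proof. by []. Qed.

Lemma padded_blocks_shift acc y k u :
  padded_blocks acc (y :: k) u = padded_blocks (acc + head 0%N u) (y :: k) (0%N :: behead u).
Proof. by rewrite !padded_blocks_cons; case: (y == 1%N); rewrite ?addn0 // addnAC. Qed.

Lemma insert_ones_cons2 x y k s :
  insert_ones [:: x, y & k] s = x :: nseq (head 0%N s) 1%N ++ insert_ones (y :: k) (behead s).
Proof. by []. Qed.

(* Nothing is inserted in front of [k_1], hence the leading [0]. *)
Lemma blocks_aux_insert_ones acc k s :
  blocks_aux acc (insert_ones k s) = padded_blocks acc k (0%N :: s).
Proof.
elim: k acc s => [|x [|y k] IH] acc s //; first by rewrite /=; case: (x == 1%N); rewrite ?addn0.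
rewrite insert_ones_cons2 blocks_aux_cons padded_blocks_cons !blocks_aux_nseq1 !IH.
rewrite [padded_blocks _ _ s]padded_blocks_shift [padded_blocks 0%N _ s]padded_blocks_shift.
by case: (x == 1%N); rewrite ?addn0 ?add0n // addn1.
Qed.

Lemma padded_blocks_block acc a b k u :
  padded_blocks acc (nseq a 1%N ++ (b + 2)%N :: k) u =
  (acc + a + sumn (take a.+1 u), b)%N :: padded_blocks 0 k (drop a.+1 u).
Proof.
elim: a acc u => [|a IH] acc u.
  rewrite /= addnK addn2 addn0.
  by case: u => [|x u] //=; rewrite take0 drop0 !addn0.
rewrite [nseq _ _ ++ _]/= padded_blocks_cons IH.
by case: u => [|x u] /=; congr ((_, _) :: _); lia.
Qed.

Lemma padded_blocks_index B u : padded_blocks 0 (index_of_blocks B) u = grow_blocks B u.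
Proof. by elim: B u => //= -[a b] B IH u; rewrite padded_blocks_block IH. Qed.

Lemma blocks_insert_ones k s : admissible k ->
  blocks (insert_ones k s) = grow_blocks (blocks k) (0%N :: s).
Proof.
move=> adm_k; rewrite /blocks blocks_aux_insert_ones -padded_blocks_index.
by rewrite -blocks_auxK.
Qed.

Lemma dual_lens_cat s t : t != [::] -> dual_lens (s ++ t) = map predn s ++ dual_lens t.
Proof.
move=> t_neq0; elim: s => //= x s ->.
by case: s t t_neq0 => [|y s] [|z t]; rewrite ?subn1.
Qed.

Lemma dual_lens_dual_of_blocks a b B :
  dual_lens (dual_of_blocks ((a, b) :: B)) =
  map predn (dual_of_blocks B) ++ nseq b 0%N ++ [:: a].
Proof.
rewrite /= dual_lens_cat ?dual_lens_cat ?map_nseq //; last by case: b.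
by rewrite /= addn2 subn2.
Qed.

Lemma sumn_pred_dual_of_blocks B : sumn (map predn (dual_of_blocks B)) = blocks_len B.
Proof.
elim: B => //= -[a b] B IH; rewrite map_cat sumn_cat IH map_cat map_nseq sumn_cat.
by rewrite sumn_nseq /= addn2; lia.
Qed.

Lemma grow_blocks_cons a b B s1 s2 : size s1 = a.+1 ->
  grow_blocks ((a, b) :: B) (s1 ++ s2) = (a + sumn s1, b)%N :: grow_blocks B s2.
Proof. by move=> s1_size /=; rewrite take_size_cat // drop_size_cat. Qed.

Lemma addseq_dual_last_block a b B c s1 s2 : size s1 = c -> size s2 = blocks_len B ->
  addseq (dual_of_blocks ((a, b) :: B))
    (block_sums (map predn (dual_of_blocks B) ++ nseq b 0%N ++ [:: c]) (s2 ++ s1)) =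
  addseq (dual_of_blocks B) (block_sums (map predn (dual_of_blocks B)) s2)
    ++ nseq b 1%N ++ [:: a + sumn s1 + 2]%N.
Proof.
move=> s1_size s2_size.
rewrite block_sums_cat ?sumn_pred_dual_of_blocks // block_sums_nseq0 /= -s1_size take_size.
rewrite addseq_cat ?size_block_sums ?size_map // addseq_ones_last.
by rewrite (addnC a) -addnA (addnC 2) addnA.
Qed.

Section BigDualBlocks.
Variables (V : nmodType) (i : nat).

Lemma big_box_last_block (H : nat -> seq nat -> V) a b B c :
  \sum_(s <- box (c + blocks_len B) i)
     H (sumn s) (addseq (dual_of_blocks ((a, b) :: B))
                   (block_sums (map predn (dual_of_blocks B) ++ nseq b 0%N ++ [:: c]) s)) =
  \sum_(s1 <- box c i) \sum_(s2 <- box (blocks_len B) i)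
     H (sumn s1 + sumn s2)%N
       (addseq (dual_of_blocks B) (block_sums (map predn (dual_of_blocks B)) s2)
          ++ nseq b 1%N ++ [:: a + sumn s1 + 2]%N).
Proof.
rewrite addnC big_box_cat exchange_big.
apply: eq_big_seq => s1 /size_box s1_size; apply: eq_big_seq => s2 /size_box s2_size.
by rewrite addseq_dual_last_block // sumn_cat addnC.
Qed.

Lemma big_box_grow_blocks (H : nat -> seq nat -> V) B :
  \sum_(s <- box (blocks_len B) i) H (sumn s) (dual_of_blocks (grow_blocks B s)) =
  \sum_(s <- box (blocks_len B) i)
     H (sumn s) (addseq (dual_of_blocks B) (block_sums (map predn (dual_of_blocks B)) s)).
Proof.
elim: B H => [|[a b] B IH] H; first by rewrite !big_seq1.
have -> : map predn (dual_of_blocks ((a, b) :: B)) =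
          map predn (dual_of_blocks B) ++ nseq b 0%N ++ [:: a.+1].
  by rewrite /= !map_cat map_nseq /= addn2.
rewrite big_box_last_block big_box_cat; apply: eq_big_seq => s1 /size_box s1_size.
rewrite -(IH (fun n X => H (sumn s1 + n)%N (X ++ nseq b 1%N ++ [:: a + sumn s1 + 2]%N))).
by apply: eq_bigr => s2 _; rewrite grow_blocks_cons // sumn_cat.
Qed.

Lemma big_box_grow_blocks_cons0 (H : nat -> seq nat -> V) a b B :
  \sum_(s <- box (a + blocks_len B) i)
     H (sumn s) (dual_of_blocks (grow_blocks ((a, b) :: B) (0%N :: s))) =
  \sum_(s <- box (a + blocks_len B) i)
     H (sumn s) (addseq (dual_of_blocks ((a, b) :: B))
                   (block_sums (map predn (dual_of_blocks B) ++ nseq b 0%N ++ [:: a]) s)).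
Proof.
rewrite big_box_last_block big_box_cat; apply: eq_big_seq => s1 /size_box s1_size.
rewrite -(big_box_grow_blocks
  (fun n X => H (sumn s1 + n)%N (X ++ nseq b 1%N ++ [:: a + sumn s1 + 2]%N))).
by apply: eq_bigr => s2 _; rewrite -cat_cons grow_blocks_cons /= ?s1_size // sumn_cat.
Qed.

End BigDualBlocks.

Lemma last_insert_ones x k s : last x (insert_ones k s) = last x k.
Proof.
elim: k x s => [|y [|z k] IH] x s //.
by rewrite insert_ones_cons2 /= last_cat IH.
Qed.

Lemma all_insert_ones (P : pred nat) k s : P 1%N -> all P k -> all P (insert_ones k s).
Proof.
move=> P1; elim: k s => [|x [|y k] IH] s //.
rewrite insert_ones_cons2 /= all_cat => /andP[-> /IH ->]; rewrite andbT.
by apply/allP => _ /nseqP[->].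
Qed.

Lemma admissible_insert_ones k s : admissible k -> admissible (insert_ones k s).
Proof.
case: k => // x k /and3P[_ k_gt0 last_gt1].
rewrite /admissible all_insert_ones // last_insert_ones last_gt1 andbT.
by case: k {k_gt0 last_gt1}.
Qed.

Lemma insert_ones_nseq0 k m : insert_ones k (nseq m 0%N) = k.
Proof.
elim: k m => [|x [|y k] IH] m //.
by case: m => [|m]; rewrite insert_ones_cons2 ?(IH 0%N) ?(IH m).
Qed.

Lemma big_box_dual_insert_ones (V : nmodType) (F : seq nat -> V) k i : admissible k ->
  \sum_(s <- box (size k).-1 i | sumn s == i) F (dual (insert_ones k s)) =
  \sum_(s <- box (sumn (dual_lens (dual k))) i | sumn s == i)
      F (addseq (dual k) (block_sums (dual_lens (dual k)) s)).
Proof.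
move=> adm_k; have k_blocks : k = index_of_blocks (blocks k) := blocks_auxK 0 k adm_k.
under eq_bigr do rewrite dual_blocks blocks_insert_ones //.
rewrite dual_blocks [in size k]k_blocks size_index_of_blocks.
case: (blocks k) k_blocks => [|[a b] B] k_blocks; first by case: k adm_k k_blocks.
have -> : (blocks_len ((a, b) :: B)).-1 = (a + blocks_len B)%N by [].
rewrite dual_lens_dual_of_blocks.
have -> : sumn (map predn (dual_of_blocks B) ++ nseq b 0%N ++ [:: a]) = (a + blocks_len B)%N.
  by rewrite !sumn_cat sumn_pred_dual_of_blocks sumn_nseq /=; lia.
rewrite big_mkcond [RHS]big_mkcond.
exact: (big_box_grow_blocks_cons0 _ i (fun n X => if n == i then F X else 0)).
Qed.

Section InsertOnesDual.
Variables (V : nmodType) (F : seq nat -> V) (k : seq nat).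
Hypothesis adm_k : admissible k.

Lemma sum_insert_ones_dual i : (forall q, admissible q -> F q = F (dual q)) ->
  \sum_(t : {ffun 'I_(size k).-1 -> 'I_i.+1} | (\sum_(j < (size k).-1) (t j : nat) == i)%N)
     F (insert_ones k [seq val (t j) | j : 'I_(size k).-1]) =
  \sum_(t : {ffun 'I_(sumn (dual_lens (dual k))) -> 'I_i.+1}
        | (\sum_(j < sumn (dual_lens (dual k))) (t j : nat) == i)%N)
     F (addseq (dual k) (block_sums (dual_lens (dual k))
          [seq val (t j) | j : 'I_(sumn (dual_lens (dual k)))])).
Proof.
move=> F_dual; rewrite (big_ffun_box _ _ _ (fun s => F (insert_ones k s))).
rewrite (big_ffun_box _ _ _ (fun s => F (addseq (dual k) (block_sums (dual_lens (dual k)) s)))).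
rewrite -big_box_dual_insert_ones //.
by apply: eq_bigr => s _; rewrite F_dual // admissible_insert_ones.
Qed.

Lemma sum_insert_ones0 :
  \sum_(t : {ffun 'I_(size k).-1 -> 'I_1} | (\sum_(j < (size k).-1) (t j : nat) == 0)%N)
     F (insert_ones k [seq val (t j) | j : 'I_(size k).-1]) = F k.
Proof.
rewrite (big_ffun_box _ _ _ (fun s => F (insert_ones k s))).
by rewrite box0 big_mkcond big_seq1 sumn_nseq mul0n eqxx insert_ones_nseq0.
Qed.

Lemma sum_insert_ones0_dual :
  \sum_(t : {ffun 'I_(sumn (dual_lens (dual k))) -> 'I_1}
        | (\sum_(j < sumn (dual_lens (dual k))) (t j : nat) == 0)%N)
     F (addseq (dual k) (block_sums (dual_lens (dual k))
          [seq val (t j) | j : 'I_(sumn (dual_lens (dual k)))])) = F (dual k).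
Proof.
rewrite (big_ffun_box _ _ _ (fun s => F (addseq (dual k) (block_sums (dual_lens (dual k)) s)))).
rewrite -big_box_dual_insert_ones // box0 big_mkcond big_seq1.
by rewrite sumn_nseq mul0n eqxx insert_ones_nseq0.
Qed.

End InsertOnesDual.

Lemma eq_big_ord_head (V : zmodType) l (F G : 'I_l.+1 -> V) :
  \sum_(i < l.+1) F i = \sum_(i < l.+1) G i ->
  (forall i : 'I_l, F (lift ord0 i) = G (lift ord0 i)) -> F ord0 = G ord0.
Proof.
by rewrite !big_ord_recl => + FG; under eq_bigr do rewrite FG; apply: addIr.
Qed.

Theorem proposition2p9 (R : realType) :
  (forall k : seq nat, admissible k ->
     forall (l : nat) (a : Cx R), 0 < complex.Re a ->
       Ssum l k a = Ssum l (dual k) a)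
  <->
  (forall k : seq nat, admissible k ->
     forall (l : nat) (a : Cx R), 0 < complex.Re a ->
       \sum_(i < l.+1)
         \sum_(t : {ffun 'I_(size k).-1 -> 'I_i.+1}
                 | (\sum_(j < (size k).-1) (t j : nat) == i)%N)
           Ssum (l - i) (insert_ones k [seq val (t j) | j : 'I_(size k).-1]) a
       =
       \sum_(i < l.+1)
         \sum_(t : {ffun 'I_(sumn (dual_lens (dual k))) -> 'I_i.+1}
                 | (\sum_(j < sumn (dual_lens (dual k))) (t j : nat) == i)%N)
           Ssum (l - i)
             (addseq (dual k)
                (block_sums (dual_lens (dual k))
                   [seq val (t j) | j : 'I_(sumn (dual_lens (dual k)))])) a).
Proof.
split=> [dual_S k adm_k l a a_gt0 | sum_S].
  apply: eq_bigr => i _.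
  by apply: (sum_insert_ones_dual _ (fun q => Ssum (l - i) q a) _ adm_k) => q /dual_S->.
suff dual_S (l : nat) (k : seq nat) (a : Cx R) :
    admissible k -> 0 < complex.Re a -> Ssum l k a = Ssum l (dual k) a.
  by move=> k adm_k l a; apply: dual_S.
elim/ltn_ind: l k a => l IH k a adm_k a_gt0.
have := eq_big_ord_head _ _ _ _ (sum_S k adm_k l a a_gt0).
rewrite /= subn0 (sum_insert_ones0 _ (fun q => Ssum l q a)).
rewrite (sum_insert_ones0_dual _ (fun q => Ssum l q a) _ adm_k).
apply=> i; apply: (sum_insert_ones_dual _ (fun q => Ssum (l - _) q a) _ adm_k) => q adm_q.
by apply: IH => //; have := ltn_ord i; rewrite /bump /=; lia.
Qed.
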